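(* If $L:\mathbb{R}^d\setminus\{0\}\to\mathbb{R}$ is $C^2$ and scale invariant, then for every $x\neq0$, $$\|\nabla L(x)\|_2\le\frac{\pi}{\|x\|_2}\sup_{\|y\|_2=1}\|\nabla^2L(y)\|_2 .$$
   Context: Scale invariant means $L(cx)=L(x)$ for all $c>0$, $x\neq0$. $\|\cdot\|_2$ on matrices is the spectral norm. *)

From HB Require Import structures.
From mathcomp Require Import all_boot all_order all_algebra.
From mathcomp Require Import all_classical all_reals all_analysis.
Set Implicit Arguments. Unset Strict Implicit. Unset Printing Implicit Defensive.
Import Order.TTheory GRing.Theory Num.Theory.
Import numFieldNormedType.Exports.
Local Open Scope classical_set_scope.
Local Open Scope ring_scope.

Section Defs.
Variable R : realType.

(* Euclidean (2-)norm of a matrix viewed as a vector of entries;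
   on row/column vectors this is the usual Euclidean norm. *)
Definition norm2 (m n : nat) (A : 'M[R]_(m, n)) : R :=
  Num.sqrt (\sum_(i < m) \sum_(j < n) A i j ^+ 2).

Definition specnorm (d : nat) (A : 'M[R]_d) : R :=
  sup [set norm2 (A *m v) | v in [set v : 'cV[R]_d | norm2 v = 1]].

Definition basis_vec (d : nat) (i : 'I_d) : 'rV[R]_d := delta_mx 0 i.

Definition partial (d : nat) (f : 'rV[R]_d -> R) (i : 'I_d) : 'rV[R]_d -> R :=
  fun x => 'D_(basis_vec i) f x.

Definition gradient (d : nat) (f : 'rV[R]_d -> R) (x : 'rV[R]_d) : 'cV[R]_d :=
  \col_i partial f i x.

Definition hessian (d : nat) (f : 'rV[R]_d -> R) (x : 'rV[R]_d) : 'M[R]_d :=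
  \matrix_(i, j) partial (partial f j) i x.

Definition C2_away0 (d : nat) (f : 'rV[R]_d -> R) : Prop :=
  (forall y, y != 0 -> {for y, continuous f}) /\
  forall i : 'I_d,
    (forall y, y != 0 -> derivable f y (basis_vec i)) /\
    (forall y, y != 0 -> {for y, continuous (partial f i)}) /\
    forall j : 'I_d,
      (forall y, y != 0 -> derivable (partial f i) y (basis_vec j)) /\
      (forall y, y != 0 -> {for y, continuous (partial (partial f i) j)}).

Definition scale_invariant (d : nat) (f : 'rV[R]_d -> R) : Prop :=
  forall (c : R) (x : 'rV[R]_d), 0 < c -> x != 0 -> f (c *: x) = f x.

End Defs.

From HB Require Import structures.
From mathcomp Require Import all_boot all_order all_algebra.
From mathcomp Require Import all_classical all_reals all_analysis.
From mathcomp Require Import lra ring.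
Import Order.TTheory GRing.Theory Num.Theory.
Import numFieldNormedType.Exports.
Local Open Scope classical_set_scope.
Local Open Scope ring_scope.

Set Implicit Arguments. Unset Strict Implicit. Unset Printing Implicit Defensive.

(* Fix a unit vector y with nonzero gradient.  Scale invariance gives Euler's
   identity <grad L(z), z> = 0, so u := grad L(y) / |grad L(y)| is a unit vector
   orthogonal to y, and g(s) = cos s y + sin s u is a great circle of the unit
   sphere.  The derivative F(s) = <grad L(g s), g' s> of L o g equals |grad L(y)|
   at s = 0 and, by Rolle's theorem, vanishes somewhere in (-pi, pi) because
   g(-pi) = g(pi).  Using Euler's identity once more, F'(s) is the Hessian
   quadratic form at g(s) evaluated on the unit vector g'(s), so the mean value
   theorem gives |grad L(y)| <= pi sup ||Hess L||.  The general case follows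
   since grad L is homogeneous of degree -1. *)

Section CauchySchwarz.
Variable R : realFieldType.

Lemma sqr_sum_mul_le (n : nat) (a b : 'I_n -> R) :
  (\sum_i a i * b i) ^+ 2 <= (\sum_i a i ^+ 2) * (\sum_i b i ^+ 2).
Proof.
set A := \sum_i a i ^+ 2; set B := \sum_i b i ^+ 2; set C := \sum_i a i * b i.
have AB : A * B = \sum_i \sum_j a i ^+ 2 * b j ^+ 2.
  by rewrite mulr_suml; apply: eq_bigr => i _; rewrite mulr_sumr.
have BA : A * B = \sum_i \sum_j a j ^+ 2 * b i ^+ 2.
  by rewrite mulrC mulr_suml; apply: eq_bigr => i _; rewrite mulr_sumr;
    apply: eq_bigr => j _; rewrite mulrC.
have CC : C ^+ 2 = \sum_i \sum_j a i * b i * (a j * b j).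
  by rewrite expr2 mulr_suml; apply: eq_bigr => i _; rewrite mulr_sumr.
have lagrange : \sum_i \sum_j (a i * b j - a j * b i) ^+ 2 = A * B + A * B - 2 * C ^+ 2.
  rewrite {1}AB BA CC mulr_sumr -big_split -sumrB /=; apply: eq_bigr => i _.
  by rewrite mulr_sumr -big_split -sumrB /=; apply: eq_bigr => j _; ring.
have : 0 <= \sum_i \sum_j (a i * b j - a j * b i) ^+ 2.
  by apply: sumr_ge0 => i _; apply: sumr_ge0 => j _; exact: sqr_ge0.
rewrite lagrange; lra.
Qed.

End CauchySchwarz.

Section Norm2.
Variable R : realType.
Implicit Types (m n d : nat).

Lemma norm2_ge0 m n (A : 'M[R]_(m, n)) : 0 <= norm2 A.
Proof. exact: sqrtr_ge0. Qed.

Lemma norm2_row d (w : 'rV[R]_d) : norm2 w = Num.sqrt (\sum_j w ord0 j ^+ 2).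
Proof. by rewrite /norm2 big_ord1. Qed.

Lemma norm2_col d (v : 'cV[R]_d) : norm2 v = Num.sqrt (\sum_i v i ord0 ^+ 2).
Proof. by rewrite /norm2; under eq_bigr do rewrite big_ord1. Qed.

Lemma sqr_norm2_row d (w : 'rV[R]_d) : norm2 w ^+ 2 = \sum_j w ord0 j ^+ 2.
Proof. by rewrite norm2_row sqr_sqrtr // sumr_ge0 // => j _; exact: sqr_ge0. Qed.

Lemma sqr_norm2_col d (v : 'cV[R]_d) : norm2 v ^+ 2 = \sum_i v i ord0 ^+ 2.
Proof. by rewrite norm2_col sqr_sqrtr // sumr_ge0 // => i _; exact: sqr_ge0. Qed.

Lemma norm2_tr m n (A : 'M[R]_(m, n)) : norm2 A^T = norm2 A.
Proof.
rewrite /norm2 exchange_big /=; congr Num.sqrt.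
by apply: eq_bigr => j _; apply: eq_bigr => i _; rewrite mxE.
Qed.

Lemma norm2Z m n (c : R) (A : 'M[R]_(m, n)) : norm2 (c *: A) = `|c| * norm2 A.
Proof.
rewrite /norm2 -sqrtr_sqr -sqrtrM ?sqr_ge0 // mulr_sumr; congr Num.sqrt.
by apply: eq_bigr => i _; rewrite mulr_sumr; apply: eq_bigr => j _; rewrite mxE exprMn.
Qed.

Lemma norm2_eq0 m n (A : 'M[R]_(m, n)) : (norm2 A == 0) = (A == 0).
Proof.
apply/idP/eqP => [|->]; last first.
  by rewrite /norm2 big1 ?sqrtr0 // => i _; rewrite big1 // => j _; rewrite mxE expr0n.
rewrite sqrtr_eq0 => A_le0.
have sq_ge0 i j : 0 <= A i j ^+ 2 by exact: sqr_ge0.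
have /psumr_eq0P row0 : \sum_i \sum_j A i j ^+ 2 = 0.
  by apply/eqP; rewrite eq_le A_le0 sumr_ge0 // => i _; exact: sumr_ge0.
apply/matrixP => i j; rewrite mxE; apply/eqP; rewrite -sqrf_eq0; apply/eqP.
have /psumr_eq0P -> // : \sum_j A i j ^+ 2 = 0.
  by apply: row0 => // k _; exact: sumr_ge0.
Qed.

Lemma norm2_gt0 m n (A : 'M[R]_(m, n)) : A != 0 -> 0 < norm2 A.
Proof. by rewrite lt0r norm2_eq0 norm2_ge0 andbT. Qed.

Lemma norm2_eq1_neq0 m n (A : 'M[R]_(m, n)) : norm2 A = 1 -> A != 0.
Proof. by rewrite -norm2_eq0 => ->; rewrite oner_eq0. Qed.

Lemma norm2_mulmx_le m n (A : 'M[R]_(m, n)) (v : 'cV[R]_n) :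
  norm2 v = 1 -> norm2 (A *m v) <= norm2 A.
Proof.
move=> v1; have vv : \sum_k v k ord0 ^+ 2 = 1 by rewrite -sqr_norm2_col v1 expr1n.
rewrite norm2_col /norm2; rewrite ler_wsqrtr // ler_sum // => i _.
rewrite mxE; apply: le_trans (sqr_sum_mul_le (A i) (v^~ ord0)) _.
by rewrite vv mulr1.
Qed.

Lemma norm2_mulmx_le_specnorm d (A : 'M[R]_d) (v : 'cV[R]_d) :
  norm2 v = 1 -> norm2 (A *m v) <= specnorm A.
Proof.
move=> v1; apply: sup_upper_bound; last by exists v.
split; first by exists (norm2 (A *m v)), v.
by exists (norm2 A) => _ [w w1 <-]; exact: norm2_mulmx_le.
Qed.

Lemma specnorm_ge0 d (A : 'M[R]_d) (v : 'cV[R]_d) : norm2 v = 1 -> 0 <= specnorm A.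
Proof. by move=> v1; apply: le_trans (norm2_mulmx_le_specnorm A v1); exact: norm2_ge0. Qed.

Lemma quad_form_le_specnorm d (A : 'M[R]_d) (w : 'rV[R]_d) : norm2 w = 1 ->
  `|\sum_j w ord0 j * (A *m w^T) j ord0| <= specnorm A.
Proof.
move=> w1; have wT1 : norm2 w^T = 1 by rewrite norm2_tr.
apply: le_trans (norm2_mulmx_le_specnorm A wT1).
rewrite -(@ler_pXn2r _ 2) ?nnegrE ?norm2_ge0 // sqr_norm2_col -normrX ger0_norm ?sqr_ge0 //.
apply: le_trans (sqr_sum_mul_le _ _) _.
by rewrite -sqr_norm2_row w1 expr1n mul1r.
Qed.

End Norm2.

Section RealCalculus.
Variable R : realType.

Lemma is_deriveZl (V : normedModType R) (k : R -> R) (w : V) (t dk : R) :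
  is_derive t 1 k dk -> is_derive t 1 (fun s => k s *: w) (dk *: w).
Proof.
move=> [dk_ex dkE].
have quotE : (fun h : R => h^-1 *: (((fun s => k s *: w) \o shift t) (h *: 1) - k t *: w))
   = (fun h => (h^-1 *: ((k \o shift t) (h *: 1) - k t)) *: w).
  by apply/funext => h /=; rewrite -scalerBl scalerA.
have cvg_quot : (fun h : R => (h^-1 *: ((k \o shift t) (h *: 1) - k t)) *: w)
    @ 0^' --> dk *: w.
  by apply: cvgZr_tmp; rewrite -dkE; exact: dk_ex.
by split; rewrite /derivable /derive quotE; [apply/cvg_ex; exists (dk *: w) | exact: cvg_lim].
Qed.

Definition great_circle (V : lmodType R) (y u : V) (s : R) : V := cos s *: y + sin s *: u.

Lemma great_circleNN (V : lmodType R) (y u : V) (t : R) :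
  great_circle (- y) (- u) t = - great_circle y u t.
Proof. by rewrite /great_circle !scalerN opprD. Qed.

Lemma is_derive_great_circle (V : normedModType R) (y u : V) (t : R) :
  is_derive t 1 (great_circle y u) (great_circle u (- y) t).
Proof.
apply: is_derive_eq (is_deriveD (is_deriveZl y (is_derive_cos t)) (is_deriveZl u (is_derive_sin t))) _.
by rewrite /great_circle scalerN scaleNr addrC.
Qed.

Lemma MVT_ball0 (f df : R -> R) (c : R) :
  (forall s : R, `|s| <= `|c| -> is_derive s 1 f (df s)) ->
  exists2 xi, `|xi| <= `|c| & f c - f 0 = df xi * c.
Proof.
move=> f'.
have mvt a b : a <= b -> (forall s, a <= s <= b -> `|s| <= `|c|) ->
    exists2 xi, `|xi| <= `|c| & f b - f a = df xi * (b - a).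
  move=> ab inab.
  have f'ab s : s \in `]a, b[ -> is_derive s 1 f (df s).
    by rewrite in_itv /= => /andP[/ltW ? /ltW ?]; apply/f'/inab/andP.
  have fc : {within `[a, b], continuous f}.
    apply: continuous_in_subspaceT => s; rewrite inE /= in_itv /= => /inab/f' [f's _].
    exact/differentiable_continuous/derivable1_diffP.
  have [xi xiab ->] := MVT_segment ab f'ab fc.
  by exists xi => //; apply: inab; rewrite !(itvP xiab).
have [c0|c0] := leP 0 c.
  have [|xi xic ->] := mvt 0 c c0; last by exists xi; rewrite ?subr0.
  by move=> s /andP[s0 sc]; rewrite !ger0_norm // (le_trans s0).
have [|xi xic E] := mvt c 0 (ltW c0).
  by move=> s /andP[cs s0]; rewrite !ler0_norm ?lerN2 // ?(ltW c0) // (le_trans cs).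
by exists xi; rewrite // -opprB E sub0r mulrN opprK.
Qed.

Lemma mvt_affine_le (g dg : R -> R) (c p eta : R) :
  (forall s : R, `|s| <= `|c| -> is_derive s 1 g (dg s)) ->
  (forall s : R, `|s| <= `|c| -> `|dg s - p| <= eta) ->
  `|g c - g 0 - c * p| <= `|c| * eta.
Proof.
move=> g' dg_near.
have [xi xic E] : exists2 xi, `|xi| <= `|c| &
    (g c - c *: p) - (g 0 - 0 *: p) = (dg xi - p) * c.
  apply: (@MVT_ball0 (fun s => g s - s *: p) (fun s => dg s - p)) => s /g' g's.
  by have := is_deriveB g's (is_deriveZl p (is_derive_id s 1)); rewrite scale1r.
move: E; rewrite scale0r subr0 [_ *: _]/(c * p) addrAC => ->.
by rewrite normrM mulrC ler_wpM2l // dg_near.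
Qed.

End RealCalculus.

Section NormedCalculus.
Variables (R : realType) (V W : normedModType R).

Lemma is_derive_along (f : V -> W) (z e : V) (t : R) :
  derivable f (z + t *: e) e ->
  is_derive t 1 (fun s => f (z + s *: e)) ('D_e f (z + t *: e)).
Proof.
move=> fe; have quotE :
  (fun h : R => h^-1 *: (((fun s => f (z + s *: e)) \o shift t) (h *: 1) - f (z + t *: e)))
  = (fun h => h^-1 *: ((f \o shift (z + t *: e)) (h *: e) - f (z + t *: e))).
  by apply/funext => h /=; rewrite scaler1 scalerDl addrCA addrA.
by split; rewrite /derivable /derive /= quotE.
Qed.

(* The existence half of [diff_unique]. *)
Lemma differentiable_littleo (f : V -> W) (df : {linear V -> W}) (x : V) :
  continuous df -> f \o shift x = cst (f x) + df +o_ 0 id -> differentiable f x.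
Proof.
move=> dfc fx.
have littleo_df h : f \o shift x = cst (f x) + h +o_ 0 id ->
    h = f \o shift x - cst (f x) +o_ 0 id.
  move=> fh; apply: eqaddoE.
  rewrite fh addrAC -!addrA addrC !addrA subrK -[LHS]addr0 -addrA; congr (_ + _).
  by apply/eqP; rewrite eq_sym addrC addr_eq0 oppo.
apply/diffP; apply: (@getPex _ (fun df : {linear V -> W} => continuous df /\
  forall y, f y = f (lim (nbhs x)) + df (y - lim (nbhs x))
                  +o_(y \near x) (y - lim (nbhs x)))).
exists df; split=> //; apply: eqaddoEx => z.
rewrite (littleo_df _ fx) !addrA lim_id // /(_ \o _) /= subrK [f _ + _]addrC addrK.
rewrite -addrA -[LHS]addr0; congr (_ + _).
apply/eqP; rewrite eq_sym addrC addr_eq0 oppox; apply/eqP.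
rewrite [in LHS]littleo_center0 (comp_centerK x id).
by rewrite -[- _ in RHS](comp_centerK x).
Qed.

Lemma near_neq0 (a : V) : a != 0 -> \forall y \near a, y != 0.
Proof.
rewrite -normr_gt0 => a_gt0; apply: filterS (@nbhsx_ballx _ _ a _ a_gt0) => y.
by rewrite -ball_normE /=; apply: contraTN => /eqP ->; rewrite subr0 ltxx.
Qed.

End NormedCalculus.

Section PartialDerivatives.
Variables (R : realType) (d : nat).
Implicit Types (f : 'rV[R]_d -> R) (a h v w z : 'rV[R]_d).

Definition grad_dot f z v : R := \sum_i v ord0 i * partial f i z.

Lemma grad_dot_linear f z : linear (grad_dot f z).
Proof.
move=> k v w; rewrite /grad_dot scaler_sumr -big_split; apply: eq_bigr => i _.
by rewrite !mxE mulrDl -mulrA.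
Qed.

Lemma grad_dot_continuous f z : continuous (grad_dot f z).
Proof.
move=> v; apply: (continuous_big (op := +%R) (x0 := 0)); first exact: add_continuous.
move=> i _ w.
have coord : {for w, continuous (fun u : 'rV[R]_d => u ord0 i)} by exact: coord_continuous.
exact: continuousM coord (@cst_continuous _ _ (partial f i z) w).
Qed.

Lemma entry_le_mx_norm w i : `|w ord0 i| <= `|w|.
Proof.
change (`|w ord0 i| <= mx_norm w); rewrite mx_normrE.
by apply/bigmax_geP; right; exists (ord0, i).
Qed.

Lemma mx_norm_le_entries w (c : R) : 0 <= c -> (forall i, `|w ord0 i| <= c) -> `|w| <= c.
Proof.
move=> c_ge0 wc; change (mx_norm w <= c); rewrite mx_normrE.
by apply/bigmax_leP; split=> // -[i j] _ /=; rewrite (ord1 i).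
Qed.

Definition row_prefix h (k : nat) : 'rV[R]_d :=
  \row_j (if (j < k)%N then h ord0 j else 0).

Lemma row_prefix0 h : row_prefix h 0 = 0.
Proof. by apply/rowP => j; rewrite !mxE. Qed.

Lemma row_prefix_full h : row_prefix h d = h.
Proof. by apply/rowP => j; rewrite !mxE ltn_ord. Qed.

Lemma row_prefixS h (k : 'I_d) :
  row_prefix h k.+1 = row_prefix h k + h ord0 k *: basis_vec R k.
Proof.
apply/rowP => j; rewrite !mxE /= ltnS leq_eqVlt.
have [->|jk] := eqVneq j k; first by rewrite eqxx ltnn mulr1 add0r.
by move: jk; rewrite -val_eqE => /negbTE ->; rewrite mulr0 addr0.
Qed.

Lemma row_prefix_segment_le h (k : 'I_d) (s : R) : `|s| <= `|h ord0 k| ->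
  `|row_prefix h k + s *: basis_vec R k| <= `|h|.
Proof.
move=> sk; apply: mx_norm_le_entries => // j; rewrite !mxE /=.
have [->|jk] := eqVneq j k.
  by rewrite ltnn mulr1 add0r (le_trans sk) ?entry_le_mx_norm.
rewrite mulr0 addr0; case: ifP => _; first exact: entry_le_mx_norm.
by rewrite normr0.
Qed.

(* Pass from [a] to [a + h] one coordinate at a time, applying the mean value
   theorem on each segment. *)
Lemma increment_le_partials f a h (del eta : R) : `|h| < del ->
  (forall y, ball a del y -> (forall i, derivable f y (basis_vec R i)) /\
                             (forall i, `|partial f i y - partial f i a| <= eta)) ->
  `|f (a + h) - f a - grad_dot f a h| <= d%:R * (`|h| * eta).
Proof.
move=> h_lt near_a.
have telescope : f (a + h) - f a =
    \sum_(k < d) (f (a + row_prefix h k.+1) - f (a + row_prefix h k)).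
  rewrite -(big_mkord xpredT (fun k => f (a + row_prefix h k.+1) - f (a + row_prefix h k))).
  by rewrite telescope_sumr // row_prefix0 row_prefix_full addr0.
have -> : f (a + h) - f a - grad_dot f a h = \sum_(k < d)
    (f (a + row_prefix h k.+1) - f (a + row_prefix h k) - h ord0 k * partial f k a).
  by rewrite sumrB -telescope.
apply: le_trans (ler_norm_sum _ _ _) _.
suff term_le (k : 'I_d) : `|f (a + row_prefix h k.+1) - f (a + row_prefix h k) -
                             h ord0 k * partial f k a| <= `|h| * eta.
  by apply: le_trans (ler_sum _ (fun k _ => term_le k)) _; rewrite sumr_const card_ord mulr_natl.
set z := a + row_prefix h k.
have in_ball s : `|s| <= `|h ord0 k| -> ball a del (z + s *: basis_vec R k).
  move=> sk; rewrite -ball_normE /= -addrA opprD addrA subrr sub0r normrN.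
  exact: le_lt_trans (row_prefix_segment_le sk) h_lt.
have := @mvt_affine_le R (fun s => f (z + s *: basis_vec R k))
  (fun s => partial f k (z + s *: basis_vec R k)) (h ord0 k) (partial f k a) eta.
rewrite scale0r addr0 /z row_prefixS addrA => mvt.
apply: le_trans (mvt _ _) _.
- by move=> s /in_ball /near_a [f' _]; exact: is_derive_along.
- by move=> s /in_ball /near_a [_ ->].
- have := (near_a a (ballxx a (le_lt_trans (normr_ge0 h) h_lt))).2 k.
  by rewrite subrr normr0 => eta_ge0; rewrite ler_wpM2r ?entry_le_mx_norm.
Qed.

Lemma differentiable_of_partial f a :
  (\forall y \near a, forall i, derivable f y (basis_vec R i)) ->
  (forall i, {for a, continuous (partial f i)}) ->
  differentiable f a /\ 'd f a =1 grad_dot f a.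
Proof.
move=> f'_near f'_cont.
pose Df : {linear 'rV[R]_d -> R} :=
  HB.pack (grad_dot f a) (GRing.isLinear.Build _ _ _ _ _ (grad_dot_linear f a)).
have Df_littleo : f \o shift a = cst (f a) + (Df : _ -> R) +o_ (0 : 'rV[R]_d) id.
  apply/eqaddoP => eps eps_gt0.
  pose eta := eps / (d%:R + 1).
  have eta_gt0 : 0 < eta by rewrite divr_gt0 // ltr_wpDl.
  have : \forall y \near a, (forall i, derivable f y (basis_vec R i)) /\
                            (forall i, `|partial f i y - partial f i a| <= eta).
    apply/(@near_andP _ (nbhs a)); split=> //.
    apply: filter_forall => i; move/cvgrPdist_le: (f'_cont i) => /(_ eta eta_gt0).
    by apply: filterS => y; rewrite distrC.
  move=> /(nbhs_ballP _ _) [del del_gt0 near_a].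
  near=> h.
  have h_lt : `|h| < del.
    have : ball (0 : 'rV[R]_d) del h by near: h; exact: nbhsx_ballx.
    by rewrite -ball_normE /= sub0r normrN.
  rewrite !fctE /cst /= opprD addrA [h + a]addrC.
  apply: le_trans (increment_le_partials h_lt near_a) _.
  rewrite mulrCA [eps * _]mulrC ler_wpM2l // /eta mulrA ler_pdivrMr ?ltr_wpDl //.
  by rewrite [_ * eps]mulrC ler_wpM2l ?(ltW eps_gt0) // lerDl.
have Df_cont : continuous Df by exact: grad_dot_continuous.
split; first exact: differentiable_littleo Df_cont Df_littleo.
by move=> v; rewrite (diff_unique Df_cont Df_littleo).
Unshelve. all: by end_near.
Qed.

Lemma is_derive_comp_grad_dot f (c : R -> 'rV[R]_d) (t : R) (dc : 'rV[R]_d) :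
  is_derive t 1 c dc -> differentiable f (c t) -> 'd f (c t) =1 grad_dot f (c t) ->
  is_derive t 1 (f \o c) (grad_dot f (c t) dc).
Proof.
move=> [c'_ex c'E] f_diff Df.
have c_diff : differentiable c t by apply/derivable1_diffP.
have fc_diff : differentiable (f \o c) t by exact: differentiable_comp.
split; first exact: diff_derivable.
rewrite deriveE // diff_comp //= -Df; congr ('d f (c t) _).
by rewrite -deriveE // c'E.
Qed.

Lemma hessian_form_le_specnorm f z v : norm2 v = 1 ->
  `|\sum_i v ord0 i * grad_dot (partial f i) z v| <= specnorm (hessian f z).
Proof.
suff -> : \sum_i v ord0 i * grad_dot (partial f i) z v =
          \sum_j v ord0 j * (hessian f z *m v^T) j ord0 by exact: quad_form_le_specnorm.
under eq_bigr do rewrite /grad_dot mulr_sumr.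
rewrite exchange_big /=; apply: eq_bigr => j _; rewrite mxE mulr_sumr.
by apply: eq_bigr => i _; rewrite !mxE mulrCA [_ * v ord0 i]mulrC.
Qed.

End PartialDerivatives.

Section GreatCircle.
Variables (R : realType) (d : nat) (y u : 'rV[R]_d).

Lemma great_circle_coord (t : R) i :
  great_circle y u t ord0 i = great_circle (y ord0 i) (u ord0 i) t.
Proof. by rewrite !mxE. Qed.

Lemma norm2_great_circle (t : R) : norm2 y = 1 -> norm2 u = 1 ->
  \sum_i y ord0 i * u ord0 i = 0 -> norm2 (great_circle y u t) = 1.
Proof.
move=> y1 u1 yu; apply/eqP; rewrite -sqrp_eq1 ?norm2_ge0 //; apply/eqP.
have sqr_sum1 (w : 'rV[R]_d) : norm2 w = 1 -> \sum_i w ord0 i ^+ 2 = 1.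
  by move=> w1; rewrite -sqr_norm2_row w1 expr1n.
rewrite sqr_norm2_row (_ : \sum_i _ = cos t ^+ 2 * \sum_i y ord0 i ^+ 2 +
    sin t ^+ 2 * \sum_i u ord0 i ^+ 2 + 2 * cos t * sin t * \sum_i y ord0 i * u ord0 i).
  by rewrite !sqr_sum1 // yu !mulr1 mulr0 addr0 cos2Dsin2.
by rewrite !mulr_sumr -!big_split /=; apply: eq_bigr => i _; rewrite !mxE; ring.
Qed.

End GreatCircle.

Section ScaleInvariant.
Variables (R : realType) (d : nat) (L : 'rV[R]_d -> R).
Hypotheses (L_C2 : C2_away0 L) (L_inv : scale_invariant L).

Lemma differentiable_L z : z != 0 -> differentiable L z /\ 'd L z =1 grad_dot L z.
Proof.
move=> z0; apply: differentiable_of_partial => [|i]; last exact: (L_C2.2 i).2.1 z z0.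
by apply: filterS (near_neq0 z0) => w w0 i; exact: (L_C2.2 i).1 w w0.
Qed.

Lemma differentiable_partial_L i z : z != 0 ->
  differentiable (partial L i) z /\ 'd (partial L i) z =1 grad_dot (partial L i) z.
Proof.
move=> z0; apply: differentiable_of_partial => [|j]; last exact: ((L_C2.2 i).2.2 j).2 z z0.
by apply: filterS (near_neq0 z0) => w w0 j; exact: ((L_C2.2 i).2.2 j).1 w w0.
Qed.

(* Euler's identity: [L] is constant along the ray through [z]. *)
Lemma grad_dot_self_eq0 z : z != 0 -> grad_dot L z z = 0.
Proof.
move=> z0; have [L_diff DL] := differentiable_L z0.
have ray_cst : \forall s \near (1 : R), L (0 + s *: z) = cst (L z) s.
  apply: filterS (@nbhsx_ballx _ _ (1 : R) 1 ltr01) => s.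
  by rewrite -ball_normE /= ltr_norml add0r => /andP[_ ?]; rewrite L_inv //; lra.
have := @is_derive_along _ _ _ L 0 z 1; rewrite add0r scale1r => ray'.
rewrite -DL -deriveE //.
have [_ <-] := near_eq_is_derive ray_cst (ray' (diff_derivable (v := z) L_diff)).
exact: derive_cst.
Qed.

Lemma gradient_scale (c : R) z : 0 < c -> z != 0 ->
  gradient L (c *: z) = c^-1 *: gradient L z.
Proof.
move=> c_gt0 z0; apply/colP => i; rewrite !mxE.
have L_scale : L = L \o *:%R c^-1.
  apply/funext => w /=; have [->|w0] := eqVneq w 0; first by rewrite scaler0.
  by rewrite L_inv // invr_gt0.
have czK : c^-1 *: (c *: z) = z by rewrite scalerA mulVf ?gt_eqF // scale1r.
have [L_diff _] := differentiable_L z0.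
have scale_diff : differentiable ( *:%R c^-1) (c *: z) by exact: ex_diff.
rewrite /partial {1}L_scale deriveE; last by apply: differentiable_comp; rewrite //= czK.
rewrite diff_comp //=; last by rewrite czK.
rewrite (@diff_val _ _ _ _ _ _ _ (is_diff_scaler c^-1 (c *: z))) czK linearZ /=.
by rewrite -deriveE.
Qed.

Section Circle.
Variables (y u : 'rV[R]_d).
Hypothesis circle_neq0 : forall s, great_circle y u s != 0.

Local Notation g := (great_circle y u).
Local Notation g' := (great_circle u (- y)).

Lemma is_derive_L_great_circle (t : R) :
  is_derive t 1 (L \o g) (grad_dot L (g t) (g' t)).
Proof.
have [L_diff DL] := differentiable_L (circle_neq0 t).
exact: is_derive_comp_grad_dot (is_derive_great_circle y u t) L_diff DL.
Qed.

(* The second derivative of [L] along the circle: the acceleration [- g t]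
   contributes nothing by Euler's identity. *)
Lemma is_derive_grad_dot_great_circle (t : R) :
  is_derive t 1 (fun s => grad_dot L (g s) (g' s))
    (\sum_i g' t ord0 i * grad_dot (partial L i) (g t) (g' t)).
Proof.
have term i : is_derive t 1 (fun s => g' s ord0 i * partial L i (g s))
    (g' t ord0 i * grad_dot (partial L i) (g t) (g' t) - g t ord0 i * partial L i (g t)).
  have coord' : is_derive t 1 (fun s => g' s ord0 i) (- g t ord0 i).
    have -> : (fun s => g' s ord0 i) = great_circle (u ord0 i) (- y ord0 i).
      by apply/funext => s; rewrite great_circle_coord mxE.
    apply: is_derive_eq (is_derive_great_circle _ _ t) _.
    by rewrite great_circleNN great_circle_coord.
  have [P_diff DP] := differentiable_partial_L i (circle_neq0 t).
  apply: is_derive_eq (is_deriveM coord' (is_derive_comp_grad_dot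
    (is_derive_great_circle y u t) P_diff DP)) _.
  by rewrite /= scalerN; congr (_ + - _); exact: mulrC.
have sumE : \sum_i (fun s => g' s ord0 i * partial L i (g s)) =
             (fun s => grad_dot L (g s) (g' s)).
  by apply/funext => s; rewrite fct_sumE.
have := is_derive_sum term; rewrite sumE => /is_derive_eq; apply.
rewrite sumrB (_ : \sum_i g t ord0 i * _ = grad_dot L (g t) (g t)) //.
by rewrite grad_dot_self_eq0 // subr0.
Qed.

Lemma great_circle_critical :
  exists2 c : R, `|c| <= pi & grad_dot L (g c) (g' c) = 0.
Proof.
have [c c_in Lg'c] : exists2 c, c \in `]- pi, pi[ & is_derive c (1 : R) (L \o g) 0.
  apply: Rolle.
  - by have := pi_gt0 R; lra.
  - by move=> s _; have [] := is_derive_L_great_circle s.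
  - apply: continuous_in_subspaceT => s _; have [Lg's _] := is_derive_L_great_circle s.
    exact/differentiable_continuous/derivable1_diffP.
  - by rewrite /= /great_circle cosN sinN cospi sinpi oppr0 !scale0r.
exists c; first by move: c_in; rewrite in_itv /= ler_norml => /andP[/ltW -> /ltW ->].
by have [_ <-] := is_derive_L_great_circle c; have [_ ->] := Lg'c.
Qed.

End Circle.

Lemma gradient_le_hessian_sphere y : norm2 y = 1 ->
  exists2 z, norm2 z = 1 & norm2 (gradient L y) <= pi * specnorm (hessian L z).
Proof.
move=> y1; set gn := norm2 (gradient L y).
have [gn0|gn_neq0] := eqVneq gn 0.
  exists y => //; rewrite gn0 mulr_ge0 ?pi_ge0 //.
  by apply: (@specnorm_ge0 _ _ _ y^T); rewrite norm2_tr.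
have gn_gt0 : 0 < gn by rewrite lt0r gn_neq0 norm2_ge0.
pose u := gn^-1 *: (gradient L y)^T.
have uE i : u ord0 i = gn^-1 * partial L i y by rewrite !mxE.
have u1 : norm2 u = 1 by rewrite norm2Z norm2_tr gtr0_norm ?invr_gt0 // mulVf.
have yu : \sum_i y ord0 i * u ord0 i = 0.
  under eq_bigr do rewrite uE mulrCA.
  by rewrite -mulr_sumr -/(grad_dot L y y) grad_dot_self_eq0 ?norm2_eq1_neq0 // mulr0.
have Ny1 : norm2 (- y) = 1 by rewrite -scaleN1r norm2Z normrN normr1 mul1r.
have uNy : \sum_i u ord0 i * (- y) ord0 i = 0.
  by under eq_bigr do rewrite [(- y) _ _]mxE mulrN mulrC; rewrite sumrN yu oppr0.
have circle_neq0 s := norm2_eq1_neq0 (norm2_great_circle s y1 u1 yu).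
have [c c_le Dc] := great_circle_critical circle_neq0.
have D0 : grad_dot L (great_circle y u 0) (great_circle u (- y) 0) = gn.
  rewrite /great_circle cos0 sin0 !scale1r !scale0r !addr0 /grad_dot.
  have sum_sqr : \sum_i partial L i y ^+ 2 = gn ^+ 2.
    by rewrite /gn sqr_norm2_col; apply: eq_bigr => i _; rewrite mxE.
  under eq_bigr do rewrite uE -mulrA -expr2.
  by rewrite -mulr_sumr sum_sqr expr2 mulKf.
have [xi _ mvt] := MVT_ball0 (c := c)
  (fun s _ => is_derive_grad_dot_great_circle circle_neq0 s).
rewrite Dc D0 sub0r in mvt.
exists (great_circle y u xi); first exact: norm2_great_circle.
rewrite -(gtr0_norm gn_gt0) -normrN mvt normrM mulrC.
by apply: ler_pM => //; apply: hessian_form_le_specnorm; exact: norm2_great_circle.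
Qed.

End ScaleInvariant.

Theorem mainTheorem6 (R : realType) (d : nat) (L : 'rV[R]_d -> R) :
  C2_away0 L -> scale_invariant L ->
  forall x : 'rV[R]_d, x != 0 ->
    ((norm2 (gradient L x))%:E <=
     (pi / norm2 x)%:E *
       ereal_sup [set (specnorm (hessian L y))%:E
                 | y in [set y : 'rV[R]_d | norm2 y = 1%R]])%E.
Proof.
move=> L_C2 L_inv x x0; set M := ereal_sup _.
have M_ub z : norm2 z = 1 -> ((specnorm (hessian L z))%:E <= M)%E.
  by move=> z1; apply: ereal_sup_ubound; exists z.
set n := norm2 x; have n_gt0 : 0 < n by exact: norm2_gt0.
pose y := n^-1 *: x.
have y1 : norm2 y = 1 by rewrite norm2Z gtr0_norm ?invr_gt0 // mulVf ?gt_eqF.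
have -> : x = n *: y by rewrite scalerA mulfV ?gt_eqF // scale1r.
rewrite gradient_scale ?norm2_eq1_neq0 // norm2Z gtr0_norm ?invr_gt0 //.
rewrite [pi / n]mulrC !EFinM -muleA.
apply: lee_wpmul2l; first by rewrite lee_fin invr_ge0 ltW.
have [z z1 grad_le] := gradient_le_hessian_sphere L_C2 L_inv y1.
apply: (@le_trans _ _ (pi%:E * (specnorm (hessian L z))%:E)%E).
  by rewrite -EFinM lee_fin.
by apply: lee_wpmul2l; [rewrite lee_fin pi_ge0 | exact: M_ub].
Qed.
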